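(* Let $p$ be a prime, $0\le\sigma'<\sigma<1$, $\delta:=(\sigma-\sigma')/(1-\sigma)$, and $a_n$ ($n\in\mathbb{N}$) defined by $a_n:=p^{\lfloor\sigma' r\rfloor}$ if $n=p^r(p^{\lfloor\delta r\rfloor+1}+1)-1$ for some $r\in\mathbb{N}$ and $a_n:=0$ otherwise. For $n\in\mathbb{N}$ let $c_n:=\frac{1}{n+1}\sum_{k\ge n}a_k\binom{k}{n}t^{k-n}\in\mathbb{Q}_p\{\{t\}\}$ and $y_g:=\sum_{n\in\mathbb{N}}c_n(X-t)^{n+1}\in\mathbb{Q}_p\{\{t\}\}[[X-t]]$. Then $|c_n|/(n+1)^{1-\sigma'}=O(1)$ as $n\to\infty$ (indeed $\le p$ for all $n$), while for every $\lambda\in[0,1-\sigma')$, $\sup_n|c_n|/(n+1)^{\lambda}=\infty$. That is, $y_g$ is exactly of log-growth $1-\sigma'$.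
   Context: $|\cdot|_p$ is the $p$-adic absolute value with $|p|_p=p^{-1}$; $\lfloor x\rfloor$ is the largest integer $\le x$. $t$ is a formal variable and $\mathbb{Q}_p\{\{t\}\}$ is the fraction field of the $p$-adic completion of $\mathbb{Z}_p[[t]][t^{-1}]$, equipped with the Gauss norm $|\sum_i b_it^i|=\sup_i|b_i|_p$. A series $\sum_m c'_m(X-t)^m$ is of log-growth $\lambda$ if $|c'_{n+1}|/(n+1)^\lambda=O(1)$ as $n\to\infty$, and exactly of log-growth $\lambda$ if it is of log-growth $\lambda$ but not of log-growth $\lambda'$ for any $\lambda'<\lambda$. *)

From Stdlib Require Import Reals ClassicalEpsilon.
From mathcomp Require prime binomial.
Open Scope R_scope.

Definition floorZ (x : R) : Z := Int_part x.

Definition delta (s' s : R) : R := (s - s') / (1 - s).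

(* the exponent floor(delta r)  (nonnegative since 0 <= sigma' < sigma < 1) *)
Definition Nidx (p : nat) (s' s : R) (r : nat) : nat :=
  (p ^ r * (p ^ (Z.to_nat (floorZ (delta s' s * INR r)) + 1) + 1) - 1)%nat.

Definition a_seq (p : nat) (s' s : R) (n : nat) : nat :=
  match excluded_middle_informative (exists r : nat, n = Nidx p s' s r) with
  | left H =>
      let r := proj1_sig (constructive_indefinite_description _ H) in
      (p ^ Z.to_nat (floorZ (s' * INR r)))%nat
  | right _ => 0%nat
  end.

Definition padic_abs_nat (p m : nat) : R :=
  if Nat.eqb m 0 then 0 else / INR (p ^ prime.logn p m).

(* c_n = sum_{k >= n} b_{n,k} t^{k-n} with b_{n,k} = a_k * C(k,n) / (n+1) in Q.
   |b_{n,k}|_p = |a_k C(k,n)|_p / |n+1|_p.  *)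
Definition coef_abs (p : nat) (s' s : R) (n k : nat) : R :=
  padic_abs_nat p (a_seq p s' s k * binomial.binomial k n)
  / padic_abs_nat p (n + 1).

(* Gauss norm |c_n| = sup_{k >= n} |b_{n,k}|_p.  "|c_n| <= B" unfolds to: *)
Definition gauss_le (p : nat) (s' s : R) (n : nat) (B : R) : Prop :=
  forall k : nat, (n <= k)%nat -> coef_abs p s' s n k <= B.

(* Only the indices k = N_r := p^r (p^{g_r+1} + 1) - 1 (g_r = floor(delta r))
   carry a nonzero a_k = p^{m_r} (m_r = floor(sigma' r)), so the whole
   statement reduces to p-adic valuations of naturals:
   - v_p(N_r + 1) = r, which makes the index r of a nonzero a_k unique;
   - v_p(n+1) <= v_p(k+1) + v_p(C(k,n)) (from (n+1) C(k+1,n+1) = (k+1) C(k,n)),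
     which with p^{v_p(n+1)} <= n+1 and m_r > sigma' r - 1 gives the upper
     bound p (n+1)^{1-sigma'};
   - v_p(C(p^M + n, n)) = 0 for n < p^M, so that at n = p^r - 1, k = N_r the
     coefficient has size exactly p^{r - m_r} >= (n+1)^{1-sigma'}, which
     beats M (n+1)^lambda for r large when lambda < 1 - sigma'. *)

From Stdlib Require Import Reals Lra Lia Psatz ZArith ClassicalEpsilon Classical.
From mathcomp Require prime binomial.
From mathcomp Require ssreflect ssrfun ssrbool eqtype ssrnat div zify.

(* The lemmas consumed by the real-valued part
   below are stated with Stdlib's arithmetic (Nat.pow, Peano order), which is
   how the definitions of the theorem are written. *)
Module PadicValuation.
Import ssreflect ssrfun ssrbool eqtype ssrnat div prime binomial zify.
Local Open Scope nat_scope.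

Lemma powE (a b : nat) : Nat.pow a b = a ^ b.
Proof. by elim: b => [|b IH] //=; rewrite expnS IH. Qed.

Section Valuation.
Variable p : nat.
Hypothesis p_prime : prime p.

Lemma logn_pow_add_coprime M q : 0 < M -> ~~ (p %| q) -> logn p (p ^ M + q) = 0.
Proof.
move=> M_gt0 p_ndvd_q; apply: logn_coprime; rewrite prime_coprime //.
by rewrite dvdn_addr // dvdn_exp.
Qed.

Lemma pfactor_leq m : 0 < m -> p ^ logn p m <= m.
Proof. by move=> m_gt0; apply: dvdn_leq => //; apply: pfactor_dvdnn. Qed.

Lemma logn_pow_add_small M j : 0 < j < p ^ M -> logn p (p ^ M + j) = logn p j.
Proof.
case/andP=> j_gt0 j_lt.
have [q p_cop_q j_eq] := pfactor_coprime p_prime j_gt0.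
set a := logn p j in j_eq *.
have a_lt_M : a < M.
  by rewrite -(ltn_exp2l _ _ (prime_gt1 p_prime)); apply: leq_ltn_trans j_lt; apply: pfactor_leq.
have pM_eq : p ^ M = p ^ (M - a) * p ^ a by rewrite -expnD subnK // ltnW.
rewrite {1}j_eq pM_eq -mulnDl logn_Gauss ?pfactorK //.
rewrite prime_coprime // dvdn_addr ?dvdn_exp ?subn_gt0 //.
by rewrite -prime_coprime.
Qed.

(* p does not divide C(p^M + n, n) for n < p^M: by induction on n, using
   (n+1) C(p^M+n+1, n+1) = (p^M+n+1) C(p^M+n, n) and the previous lemma. *)
Lemma logn_binomial_pow_add M n :
  (n < Nat.pow p M)%coq_nat -> logn p 'C((Nat.pow p M + n)%coq_nat, n) = 0.
Proof.
rewrite powE plusE => /ltP; elim: n => [|n IH] n_lt; first by rewrite bin0 logn1.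
have := congr1 (logn p) (mul_bin_diag (p ^ M + n.+1) n).
rewrite addnS /= !lognM ?bin_gt0 ?ltnS ?leq_addl // IH 1?ltnW //.
by rewrite -addnS logn_pow_add_small //; lia.
Qed.

(* From (n+1) C(k+1, n+1) = (k+1) C(k, n). *)
Lemma logn_succ_binomial k n :
  (n <= k)%coq_nat -> (logn p (S n) <= logn p (S k) + logn p 'C(k, n))%coq_nat.
Proof.
move/leP=> n_le_k; apply/leP; have := congr1 (logn p) (mul_bin_diag k.+1 n).
by rewrite /= !lognM ?bin_gt0 //; lia.
Qed.

Lemma logn_pow m : logn p (Nat.pow p m) = m.
Proof. by rewrite powE pfactorK. Qed.

Lemma logn_pow_mul m c :
  (0 < c)%coq_nat -> logn p (Nat.mul (Nat.pow p m) c) = (m + logn p c)%coq_nat.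
Proof.
by move/ltP=> c_gt0; rewrite lognM ?powE ?expn_gt0 ?(prime_gt0 p_prime) // -powE logn_pow.
Qed.

Lemma logn_witness r j :
  logn p (Nat.mul (Nat.pow p r) (Nat.pow p (S j) + 1)%coq_nat) = r.
Proof.
rewrite logn_pow_mul powE; last lia.
by rewrite logn_pow_add_coprime ?dvdn1 ?gtn_eqF ?prime_gt1 //; lia.
Qed.

Lemma pfactor_le m : (0 < m)%coq_nat -> (Nat.pow p (logn p m) <= m)%coq_nat.
Proof. by move/ltP=> m_gt0; apply/leP; rewrite powE pfactor_leq. Qed.

End Valuation.

Lemma prime_ge2 p : prime p -> (2 <= p)%coq_nat.
Proof. by move/prime_gt1/leP. Qed.

Lemma binomial_pos k n : (n <= k)%coq_nat -> (0 < 'C(k, n))%coq_nat.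
Proof. by move/leP=> n_le_k; apply/ltP; rewrite bin_gt0. Qed.
End PadicValuation.

Import PadicValuation.
Open Scope R_scope.

Lemma floor_nat_bounds x : 0 <= x ->
  INR (Z.to_nat (floorZ x)) <= x < INR (Z.to_nat (floorZ x)) + 1.
Proof.
  intros hx. unfold floorZ. destruct (base_Int_part x) as [h1 h2].
  assert (h0 : (0 <= Int_part x)%Z).
  { assert (h : (-1 < Int_part x)%Z) by (apply lt_IZR; lra). lia. }
  rewrite INR_IZR_INZ, Z2Nat.id by exact h0. lra.
Qed.

(* Natural powers as real powers, so that exponents may be compared as reals. *)
Lemma INR_pow_Rpower (p a : nat) : (0 < p)%nat -> INR (p ^ a) = Rpower (INR p) (INR a).
Proof. intros hp. rewrite pow_INR, Rpower_pow; [reflexivity | apply lt_0_INR; exact hp]. Qed.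

Lemma Rpower_pos x y : 0 < Rpower x y.
Proof. apply exp_pos. Qed.

(* Upper estimate: if s' a <= 1 + b and x^a <= N then x^{a-b} <= x N^{1-s'},
   since x^{a-b} <= x^{1 + a(1-s')} = x (x^a)^{1-s'}. *)
Lemma Rpower_ratio_upper (x a b s' N : R) :
  1 <= x -> s' <= 1 -> s' * a <= 1 + b -> Rpower x a <= N ->
  Rpower x a / Rpower x b <= x * Rpower N (1 - s').
Proof.
  intros hx hs hab haN.
  unfold Rdiv; rewrite <- Rpower_Ropp, <- Rpower_plus.
  apply Rle_trans with (Rpower x (1 + a * (1 - s'))).
  - apply Rle_Rpower; [exact hx | nra].
  - rewrite Rpower_plus, Rpower_1, <- Rpower_mult by lra.
    apply Rmult_le_compat_l; [lra |].
    apply Rle_Rpower_l; [lra | split; [apply Rpower_pos | exact haN]].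
Qed.

Lemma Rpower_ratio_lower (x r m s' lam M : R) :
  1 <= x -> m <= s' * r -> M < Rpower x ((1 - s' - lam) * r) ->
  M * Rpower (Rpower x r) lam < Rpower x r / Rpower x m.
Proof.
  intros hx hm hM.
  rewrite Rpower_mult.
  apply Rlt_le_trans with (Rpower x ((1 - s' - lam) * r) * Rpower x (r * lam)).
  - apply Rmult_lt_compat_r; [apply Rpower_pos | exact hM].
  - unfold Rdiv; rewrite <- Rpower_Ropp, <- !Rpower_plus.
    apply Rle_Rpower; [exact hx | nra].
Qed.

(* x^{eps r} is unbounded along the naturals, since exp y >= 1 + y. *)
Lemma Rpower_unbounded x eps M : 1 < x -> 0 < eps ->
  exists r : nat, M < Rpower x (eps * INR r).
Proof.
  intros hx heps.
  assert (hlog : 0 < eps * ln x).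
  { apply Rmult_lt_0_compat; [exact heps | rewrite <- ln_1; apply ln_increasing; lra]. }
  destruct (INR_archimed (eps * ln x) M hlog) as [r hr].
  exists r. unfold Rpower. pose proof (exp_ineq1_le (eps * INR r * ln x)). nra.
Qed.

Section Coefficients.
Variables (p : nat) (s' s : R).
Hypothesis p_prime : prime.prime p = true.
Hypothesis s'_nonneg : 0 <= s'.
Hypothesis s'_le_1 : s' <= 1.

Definition gap_exp (r : nat) : nat := Z.to_nat (floorZ (delta s' s * INR r)).
Definition weight_exp (r : nat) : nat := Z.to_nat (floorZ (s' * INR r)).

Lemma p_ge2 : (2 <= p)%nat.
Proof. exact (prime_ge2 p p_prime). Qed.

Lemma weight_exp_bounds r : INR (weight_exp r) <= s' * INR r < INR (weight_exp r) + 1.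
Proof. apply floor_nat_bounds. apply Rmult_le_pos; [exact s'_nonneg | apply pos_INR]. Qed.

Lemma Nidx_succ r : (Nidx p s' s r + 1 = p ^ r * (p ^ S (gap_exp r) + 1))%nat.
Proof.
  unfold Nidx. fold (gap_exp r). rewrite (Nat.add_1_r (gap_exp r)).
  assert (h : (1 <= p ^ r)%nat) by (apply Nat.pow_lower_bound; pose proof p_ge2; lia).
  nia.
Qed.

Lemma logn_Nidx_succ r : prime.logn p (Nidx p s' s r + 1) = r.
Proof. rewrite Nidx_succ. exact (logn_witness p p_prime r (gap_exp r)). Qed.

(* N_r = p^{r+g_r+1} + (p^r - 1), the shape needed for logn_binomial_pow_add. *)
Lemma Nidx_split r :
  Nidx p s' s r = (p ^ (r + S (gap_exp r)) + (p ^ r - 1))%nat /\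
  (p ^ r - 1 < p ^ (r + S (gap_exp r)))%nat.
Proof.
  pose proof (Nidx_succ r) as E. rewrite Nat.pow_add_r.
  assert (h1 : (1 <= p ^ r)%nat) by (apply Nat.pow_lower_bound; pose proof p_ge2; lia).
  assert (h2 : (1 <= p ^ S (gap_exp r))%nat) by (apply Nat.pow_lower_bound; pose proof p_ge2; lia).
  split; nia.
Qed.

(* The index r of N_r is recovered as v_p(N_r + 1), so a_{N_r} = p^{m_r}. *)
Lemma a_seq_Nidx r : a_seq p s' s (Nidx p s' s r) = (p ^ weight_exp r)%nat.
Proof.
  unfold a_seq. destruct excluded_middle_informative as [H | H].
  - destruct (constructive_indefinite_description _ H) as [r' Hr']. simpl.
    assert (r' = r) as ->.
    { rewrite <- (logn_Nidx_succ r'), <- Hr'. apply logn_Nidx_succ. }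
    reflexivity.
  - exfalso. apply H. exists r. reflexivity.
Qed.

Lemma a_seq_cases k : a_seq p s' s k = 0%nat \/
  exists r, k = Nidx p s' s r /\ a_seq p s' s k = (p ^ weight_exp r)%nat.
Proof.
  destruct (classic (exists r, k = Nidx p s' s r)) as [[r Hr] | H].
  - right. exists r. split; [exact Hr |]. subst k. apply a_seq_Nidx.
  - left. unfold a_seq. destruct excluded_middle_informative; [contradiction | reflexivity].
Qed.

Lemma coef_abs_formula n k m : (n <= k)%nat -> a_seq p s' s k = (p ^ m)%nat ->
  coef_abs p s' s n k =
  Rpower (INR p) (INR (prime.logn p (n + 1)))
  / Rpower (INR p) (INR (m + prime.logn p (binomial.binomial k n))).
Proof.
  intros hk ha. pose proof (binomial_pos k n hk) as hC. pose proof p_ge2.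
  assert (hm : (1 <= p ^ m)%nat) by (apply Nat.pow_lower_bound; lia).
  unfold coef_abs, padic_abs_nat. rewrite ha.
  replace (Nat.eqb (p ^ m * binomial.binomial k n) 0) with false
    by (symmetry; apply Nat.eqb_neq; nia).
  replace (Nat.eqb (n + 1) 0) with false by (symmetry; apply Nat.eqb_neq; lia).
  rewrite (logn_pow_mul p p_prime m) by exact hC.
  rewrite <- !INR_pow_Rpower by lia.
  assert (P1 : 0 < INR (p ^ (m + prime.logn p (binomial.binomial k n))))
    by (apply lt_0_INR, Nat.neq_0_lt_0, Nat.pow_nonzero; lia).
  assert (P2 : 0 < INR (p ^ prime.logn p (n + 1)))
    by (apply lt_0_INR, Nat.neq_0_lt_0, Nat.pow_nonzero; lia).
  field. split; lra.
Qed.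

(* Upper bound |c_n| <= p (n+1)^{1-sigma'}: with v = v_p(n+1), c = v_p(C(N_r,n)),
   one has v <= r + c, hence sigma' v <= sigma' r + c < 1 + m_r + c. *)
Lemma coef_abs_upper n : gauss_le p s' s n (INR p * Rpower (INR (n + 1)) (1 - s')).
Proof.
  intros k hk. pose proof p_ge2 as hp.
  assert (hx : 1 <= INR p) by (apply (le_INR 1); lia).
  destruct (a_seq_cases k) as [Ha | [r [Hk Ha]]].
  - unfold coef_abs. rewrite Ha, Nat.mul_0_l. unfold padic_abs_nat at 1; simpl.
    unfold Rdiv; rewrite Rmult_0_l.
    apply Rmult_le_pos; [lra | left; apply Rpower_pos].
  - rewrite (coef_abs_formula n k _ hk Ha).
    pose proof (logn_succ_binomial p p_prime k n hk) as hv.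
    rewrite <- (Nat.add_1_r n), <- (Nat.add_1_r k), Hk, logn_Nidx_succ, <- Hk in hv.
    apply le_INR in hv. rewrite plus_INR in hv.
    pose proof (weight_exp_bounds r) as hw. rewrite plus_INR.
    set (v := INR (prime.logn p (n + 1))) in *.
    set (c := INR (prime.logn p (binomial.binomial k n))) in *.
    assert (hc : 0 <= c) by apply pos_INR.
    assert (K1 : 0 <= s' * (INR r + c - v)) by (apply Rmult_le_pos; lra).
    assert (K2 : 0 <= (1 - s') * c) by (apply Rmult_le_pos; lra).
    apply Rpower_ratio_upper; [exact hx | exact s'_le_1 | lra |].
    unfold v. rewrite <- INR_pow_Rpower by lia. apply le_INR, pfactor_le. lia.
Qed.

(* Lower bound at n = p^r - 1: the t^{N_r - n} coefficient of c_n has size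
   p^{r - m_r}, which exceeds M (n+1)^lam = M p^{r lam} once
   M < p^{(1 - sigma' - lam) r}. *)
Lemma coef_abs_witness r lam M :
  M < Rpower (INR p) ((1 - s' - lam) * INR r) ->
  ~ gauss_le p s' s (p ^ r - 1) (M * Rpower (INR (p ^ r - 1 + 1)) lam).
Proof.
  intros hM Hle. pose proof p_ge2 as hp.
  destruct (Nidx_split r) as [E hlt].
  assert (hk : (p ^ r - 1 <= Nidx p s' s r)%nat) by lia.
  specialize (Hle _ hk).
  rewrite (coef_abs_formula _ _ _ hk (a_seq_Nidx r)) in Hle.
  assert (h1 : (1 <= p ^ r)%nat) by (apply Nat.pow_lower_bound; lia).
  replace (p ^ r - 1 + 1)%nat with (p ^ r)%nat in Hle by lia.
  rewrite E, logn_binomial_pow_add, Nat.add_0_r, logn_pow, INR_pow_Rpower in Hle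
    by (auto; lia).
  pose proof (weight_exp_bounds r) as [hw _].
  pose proof (Rpower_ratio_lower (INR p) (INR r) _ s' lam M
                ltac:(apply (le_INR 1); lia) hw hM).
  lra.
Qed.

End Coefficients.

Theorem mainTheorem4 (p : nat) (s' s : R) :
  prime.prime p = true ->
  0 <= s' -> s' < s -> s < 1 ->
  (* |c_n| / (n+1)^{1-sigma'} <= p for all n (in particular O(1)) *)
  (forall n : nat,
      gauss_le p s' s n (INR p * Rpower (INR (n + 1)) (1 - s'))) /\
  (* for every lambda in [0, 1-sigma'), sup_n |c_n|/(n+1)^lambda = infinity *)
  (forall lam : R, 0 <= lam -> lam < 1 - s' ->
     forall M : R, exists n : nat,
       ~ gauss_le p s' s n (M * Rpower (INR (n + 1)) lam)).
Proof.
  intros p_prime s'_nonneg s'_lt_s s_lt_1.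
  split.
  - apply coef_abs_upper; [exact p_prime | exact s'_nonneg | lra].
  - intros lam _ lam_lt M.
    assert (hx : 1 < INR p) by (apply lt_1_INR, (prime_ge2 p p_prime)).
    destruct (Rpower_unbounded (INR p) (1 - s' - lam) M hx) as [r hr]; [lra |].
    exists (p ^ r - 1)%nat.
    exact (coef_abs_witness p s' s p_prime s'_nonneg r lam M hr).
Qed.
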